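(* Let $\{\mu_\theta\}_{\theta\in\Theta}$ be a family of Gibbs measures satisfying the uniform Gibbs property with constant $N$ and constants $\mathcal{P}_\theta$, for potentials $\phi_\theta$, and let $L$ satisfy the Loss Assumption. Then for every $\epsilon>0$ there exists $T>0$ such that for all $\theta,\theta'\in\Theta$, $y\in\mathcal{Y}$ and integers $t\ge1$, $$\frac{\int_{\mathcal{X}}\exp(-L^t_\theta(x,y))\,d\mu_\theta(x)}{\int_{\mathcal{X}}\exp(-L^t_{\theta'}(x',y))\,d\mu_{\theta'}(x')}\le N^2\exp\Big(t\big(\omega(d_\Theta(\theta,\theta'))+\epsilon\big)+(t+T)\big(|\mathcal{P}_\theta-\mathcal{P}_{\theta'}|+\|\phi_\theta-\phi_{\theta'}\|\big)\Big),$$ where $\|\cdot\|$ is the sup norm.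
   Context: Discrete time $\mathbb{T}=\mathbb{N}$. $\mathcal{S}$ is a finite alphabet, $\mathcal{X}=\mathcal{S}^{\mathbb{N}}$ with the product topology and metric $d_{\mathcal{X}}(x,x')=2^{-n(x,x')}$, $n(x,x')=\inf\{m:x_m\ne x'_m\}$; $(\Phi x)_s=x_{s+1}$; $\mathcal{F}_r=\sigma(x_0,\dots,x_r)$. $\mathcal{Y}$ is Polish with a measurable map $\Psi$ (iterates $\Psi^t$). $\Theta$ is a compact metric space with metric $d_\Theta$. $\phi^t=\sum_{s=0}^{t-1}\phi\circ\Phi^s$. Uniform Gibbs property: each $\mu_\theta$ is a $\Phi$-invariant Borel probability on $\mathcal{X}$, $\phi_\theta:\mathcal{X}\to\mathbb{R}$ is Hölder continuous, and there are $N>0$ and $\mathcal{P}_\theta\in\mathbb{R}$ with $N^{-1}\le\mu_\theta(\{\bar x:\bar x_i=x_i,0\le i\le t-1\})/\exp(-\mathcal{P}_\theta t+\phi_\theta^t(x))\le N$ for all $\theta$, $x$, $t\ge1$. Loss Assumption: $L:\Theta\times\mathcal{X}\times\mathcal{Y}\to\mathbb{R}$ with (1) for each $\theta$, $L_\theta$ is bounded continuous on $\mathcal{X}\times\mathcal{Y}$ and depends on $x$ only through $(x_0,\dots,x_r)$ for some $r$; (2) $|L_\theta(x,y)-L_{\theta'}(x',y)|\le\omega(d_\Theta(\theta,\theta'))+\omega(d_{\mathcal{X}}(x,x'))$ for some $\omega:[0,\infty)\to[0,\infty)$ with $\omega(0)=\lim_{r\to0^+}\omega(r)=0$. $L^t_\theta(x,y)=\sum_{s=0}^{t-1}L_\theta(\Phi^sx,\Psi^sy)$.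 *)

From Stdlib Require List.
From HB Require Import structures.
From mathcomp Require Import all_boot all_order all_algebra.
From mathcomp Require Import all_classical all_reals all_analysis.

Set Implicit Arguments.
Unset Strict Implicit.
Unset Printing Implicit Defensive.
Import Order.TTheory GRing.Theory Num.Theory.
Local Open Scope classical_set_scope.
Local Open Scope ring_scope.

Section Defs.
Variable R : realType.

Section Shift.
Variable S : pointedType.   (* finiteness is a separate hypothesis *)

Definition shiftX (x : nat -> S) : nat -> S := fun s => x s.+1.

Definition dX (x x' : nat -> S) : R :=
  match pselect (exists m, x m != x' m) with
  | left h => (2^-1) ^+ (ex_minn h)
  | right _ => 0
  end.

(* open sets of the metric d_X (= the product topology) *)
Definition openX (U : set (nat -> S)) : Prop :=
  forall x, U x -> exists2 e : R, 0 < e & forall x', dX x x' < e -> U x'.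

Definition Xm := g_sigma_algebraType openX.

Definition cyl (x : nat -> S) (t : nat) : set Xm :=
  [set xb | forall i, (i < t)%N -> xb i = x i].

Definition birkhoff (phi : (nat -> S) -> R) (t : nat) (x : nat -> S) : R :=
  \sum_(s < t) phi (iter s shiftX x).

Definition holder (phi : (nat -> S) -> R) : Prop :=
  exists C alpha : R, 0 < alpha /\
    forall x x', `|phi x - phi x'| <= C * powR (dX x x') alpha.

Definition supnorm (f : (nat -> S) -> R) : R := sup (range (fun x => `|f x|)).

Definition shift_invariant (mu : probability Xm R) : Prop :=
  forall A : set Xm, measurable A -> mu (shiftX @^-1` A) = mu A.

End Shift.

Definition uniform_Gibbs (S : pointedType) (Theta : Type)
  (mu : Theta -> probability (Xm S) R) (phi : Theta -> (nat -> S) -> R)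
  (N : R) (P : Theta -> R) : Prop :=
  0 < N /\
  forall th, shift_invariant (mu th) /\ holder (phi th) /\
    forall (x : nat -> S) (t : nat), (1 <= t)%N ->
      ((N^-1 * expR (- P th * t%:R + birkhoff (phi th) t x))%:E
         <= mu th (cyl x t))%E /\
      (mu th (cyl x t) <= (N * expR (- P th * t%:R + birkhoff (phi th) t x))%:E)%E.

Definition is_metric (T : Type) (d : T -> T -> R) : Prop :=
  [/\ forall a b, 0 <= d a b, forall a b, d a b = 0 <-> a = b,
      forall a b, d a b = d b a & forall a b c, d a c <= d a b + d b c].

Definition open_d (T : Type) (d : T -> T -> R) (U : set T) : Prop :=
  forall a, U a -> exists2 e : R, 0 < e & forall b, d a b < e -> U b.

Definition compact_d (T : Type) (d : T -> T -> R) : Prop :=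
  forall (I : Type) (U : I -> set T), (forall i, open_d d (U i)) ->
    [set: T] `<=` \bigcup_(i in [set: I]) U i ->
    exists s : seq I, [set: T] `<=` \bigcup_(i in [set i | Stdlib.Lists.List.In i s]) U i.

Definition separable (Y : topologicalType) : Prop :=
  exists D : set Y, countable D /\ dense D.

Definition borel_measurable (Y : topologicalType) (f : Y -> Y) : Prop :=
  forall B : set Y, <<s open >> B -> <<s open >> (f @^-1` B).

Definition loss_assumption (S : pointedType) (Theta : Type) (Y : topologicalType)
  (dT : Theta -> Theta -> R) (L : Theta -> (nat -> S) -> Y -> R)
  (omega : R -> R) : Prop :=
  (forall th,
     (exists M : R, forall x y, `|L th x y| <= M) /\
     (* continuity on X x Y (X with the d_X topology = product topology) *)
     (forall x y e, 0 < e -> exists2 delta : R, 0 < delta &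
        \forall y' \near y, forall x', dX x x' < delta ->
          `|L th x' y' - L th x y| < e) /\
     (exists r : nat, forall x x' y, (forall i, (i <= r)%N -> x i = x' i) ->
          L th x y = L th x' y)) /\
  (forall r, 0 <= r -> 0 <= omega r) /\ omega 0 = 0 /\
  omega x @[x --> 0^'+] --> 0 /\
  (forall th th' x x' y,
     `|L th x y - L th' x' y| <= omega (dT th th') + omega (dX x x')).

Definition lossT (S : pointedType) (Theta Y : Type)
  (L : Theta -> (nat -> S) -> Y -> R) (Psi : Y -> Y)
  (th : Theta) (t : nat) (x : nat -> S) (y : Y) : R :=
  \sum_(s < t) L th (iter s (@shiftX S) x) (iter s Psi y).

End Defs.

(* Write D = |P th - P th'| + ||phi th - phi th'|| and fix eps > 0.
   - Since omega r -> 0 as r -> 0+, there is m such that omega (d_X x x') <= eps/2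
     whenever x, x' agree on their first m coordinates; we take T := m.
   - If x, x' agree on the first n := t + m coordinates, then every term of the
     loss sums L^t_th(x,y), L^t_th'(x',y) differs by at most omega (d th th') + eps/2.
   - A nonnegative function depending only on the first n coordinates integrates
     to a finite sum over words of length n weighted by cylinder masses, and by
     the Gibbs property n-cylinder masses of mu th and mu th' differ by a factor
     at most N^2 exp (n D).
   - With h the integrand of th evaluated on the n-truncation of x:
       int e^{-L^t_th} dmu_th  <= e^{t eps/2} int h dmu_th
       int h dmu_th            <= N^2 e^{nD} int h dmu_th'
       int h dmu_th'           <= e^{t (omega (d th th') + eps/2)} int e^{-L^t_th'} dmu_th'
     and chaining the three bounds gives the claim. *)
From Pilot Require Import Defs.
From HB Require Import structures.
From mathcomp Require Import all_boot all_order all_algebra.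
From mathcomp Require Import all_classical all_reals all_analysis.
From mathcomp Require Import ring lra.
Import Order.TTheory GRing.Theory Num.Theory.
Local Open Scope classical_set_scope.
Local Open Scope ring_scope.

Section ShiftSpace.
Context {R : realType} {S : pointedType}.

Local Notation dX := (@dX R S).
Local Notation cyl := (@cyl R S).

Definition agree_upto (n : nat) (x x' : nat -> S) : Prop :=
  forall i, (i < n)%N -> x i = x' i.

Lemma agree_uptoW {n k x x'} : (n <= k)%N -> agree_upto k x x' -> agree_upto n x x'.
Proof. by move=> hnk hx i hi; apply: hx; exact: leq_trans hi hnk. Qed.

Lemma dX_ge0 (x x' : nat -> S) : 0 <= dX x x'.
Proof. by rewrite /Defs.dX; case: pselect => // h; apply: exprn_ge0; lra. Qed.

Lemma dX_le_agree {x x' : nat -> S} {m} : agree_upto m x x' -> dX x x' <= (2^-1) ^+ m.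
Proof.
move=> hx; rewrite /Defs.dX; case: pselect => h; last by apply: exprn_ge0; lra.
case: ex_minnP => k hk _.
have hmk : (m <= k)%N.
  by rewrite leqNgt; apply/negP => hkm; move: hk; rewrite hx // eqxx.
by rewrite ler_iXn2l //; lra.
Qed.

Lemma agree_dX_lt (x x' : nat -> S) n : dX x x' < (2^-1) ^+ n -> agree_upto n x x'.
Proof.
move=> hd i hi; apply/eqP/negPn/negP => hne.
move: hd; rewrite /Defs.dX; case: pselect => h; last by exfalso; apply: h; exists i.
case: ex_minnP => k _ hmin.
rewrite ltr_iXn2l; [|lra|lra].
by rewrite ltnNge (leq_trans (hmin i hne) (ltnW hi)).
Qed.

(* Cylinders are open, hence Borel. *)
Lemma cyl_measurable (x : nat -> S) n : measurable (cyl x n : set (Xm R S)).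
Proof.
apply: sub_gen_smallest => x' hx'; exists ((2^-1) ^+ n); first by apply: exprn_gt0; lra.
by move=> x'' /agree_dX_lt hd i hi; rewrite -hd // hx'.
Qed.

Definition truncX (n : nat) (x : nat -> S) : nat -> S :=
  fun i => if (i < n)%N then x i else point.

Lemma agree_truncX n x : agree_upto n x (truncX n x).
Proof. by move=> i hi; rewrite /truncX hi. Qed.

Lemma truncX_agree n x x' : agree_upto n x x' -> truncX n x = truncX n x'.
Proof.
by move=> hx; apply/funext => i; rewrite /truncX; case: ltnP => // /hx ->.
Qed.

Lemma supnorm_ge (f : (nat -> S) -> R) M :
  (forall x, `|f x| <= M) -> forall x, `|f x| <= supnorm f.
Proof.
move=> hM x; apply: sup_upper_bound; last by exists x.
by split; [exists `|f x|, x | exists M => _ [z _ <-]].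
Qed.

(* Hoelder functions on X are bounded, since d_X <= 1. *)
Lemma holder_bounded (g : (nat -> S) -> R) : holder g -> exists M, forall x, `|g x| <= M.
Proof.
case=> C [a [a0 hC]]; pose p : nat -> S := fun=> point.
exists (`|g p| + `|C|) => x.
have hd1 : dX x p <= 1 by rewrite -(expr0 (2^-1 : R)); apply: dX_le_agree.
have hpow : powR (dX x p) a <= 1.
  have := @ge0_ler_powR R a (ltW a0) (dX x p) 1.
  by rewrite powR1; apply; rewrite ?nnegrE ?dX_ge0.
have -> : g x = (g x - g p) + g p by rewrite subrK.
rewrite addrC; apply: (le_trans (ler_normD _ _)).
rewrite lerD2l; apply: (le_trans (hC x p)).
apply: (le_trans (ler_wpM2r (powR_ge0 _ _) (ler_norm C))).
by rewrite -[leRHS]mulr1; apply: ler_wpM2l.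
Qed.

Lemma birkhoff_sub_le (phi1 phi2 : (nat -> S) -> R) n x :
  holder phi1 -> holder phi2 ->
  birkhoff phi1 n x - birkhoff phi2 n x <= n%:R * supnorm (fun u => phi1 u - phi2 u).
Proof.
move=> /holder_bounded [M1 hM1] /holder_bounded [M2 hM2].
have hsup := @supnorm_ge (fun u => phi1 u - phi2 u) (M1 + M2)
  (fun u => le_trans (ler_normB _ _) (lerD (hM1 u) (hM2 u))).
have -> : n%:R * supnorm (fun u => phi1 u - phi2 u)
          = \sum_(j < n) supnorm (fun u => phi1 u - phi2 u).
  by rewrite sumr_const card_ord mulr_natl.
rewrite /birkhoff -sumrB.
by apply: ler_sum => j _; apply: le_trans (ler_norm _) _; exact: hsup.
Qed.

Lemma iter_shiftX k (x : nat -> S) i : iter k (@shiftX S) x i = x (k + i)%N.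
Proof. by elim: k x i => [|k IH] x i //=; rewrite /shiftX IH addSnnS. Qed.

Lemma agree_iter_shiftX {k n x x'} :
  agree_upto (k + n) x x' -> agree_upto n (iter k (@shiftX S) x) (iter k (@shiftX S) x').
Proof. by move=> hx i hi; rewrite !iter_shiftX; apply: hx; rewrite ltn_add2l. Qed.

End ShiftSpace.

Section CylinderFunctions.
Context {R : realType} {S : pointedType} {alphabet : seq S}.
Hypothesis alphabet_full : forall a : S, a \in alphabet.

Local Notation cyl := (@cyl R S).

Definition depends_upto (n : nat) (f : (nat -> S) -> R) : Prop :=
  forall x x', agree_upto n x x' -> f x = f x'.

Lemma depends_uptoW {n k f} : (n <= k)%N -> depends_upto n f -> depends_upto k f.
Proof. by move=> hnk hf x x' /(agree_uptoW hnk); exact: hf. Qed.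

Fixpoint words n : seq (seq S) :=
  if n is n'.+1 then [seq rcons w a | w <- words n', a <- alphabet] else [:: [::]].

Definition ext (w : seq S) : nat -> S := fun i => nth point w i.

Lemma mkseq_in_words (x : nat -> S) n : mkseq x n \in words n.
Proof. by elim: n => [|n IH] //=; rewrite mkseqS; exact: allpairs_f. Qed.

Lemma size_words n w : w \in words n -> size w = n.
Proof.
elim: n w => [|n IH] w /=; first by rewrite inE => /eqP ->.
by case/allpairsP => [[u a]] /= [hu _ ->]; rewrite size_rcons (IH _ hu).
Qed.

Lemma in_cyl_ext x w : (x \in cyl (ext w) (size w)) = (mkseq x (size w) == w).
Proof.
apply/idP/eqP => [|hw]; rewrite inE.
- move=> hx; apply: (@eq_from_nth _ point); first by rewrite size_mkseq.
  by move=> i; rewrite size_mkseq => hi; rewrite nth_mkseq // hx.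
- by move=> i hi; rewrite /ext -hw nth_mkseq.
Qed.

Lemma cylinder_decomposition n f (hf : depends_upto n f) x :
  f x = \sum_(w <- undup (words n)) f (ext w) * \1_(cyl (ext w) n) x.
Proof.
have hx : mkseq x n \in undup (words n) by rewrite mem_undup mkseq_in_words.
rewrite (bigD1_seq (mkseq x n)) ?undup_uniq //= big1_seq ?addr0.
  rewrite indicE mem_set ?mulr1 => [|i hi]; last by rewrite /ext nth_mkseq.
  by apply: hf => i hi; rewrite /ext nth_mkseq.
move=> w /andP[hne]; rewrite mem_undup => /size_words hw.
by rewrite indicE -hw in_cyl_ext hw eq_sym (negbTE hne) mulr0.
Qed.

Lemma integral_cylinder_function (mu : probability (Xm R S) R) n f
  (f0 : forall x, 0 <= f x) (hf : depends_upto n f) :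
  Rintegral mu setT f = \sum_(w <- undup (words n)) f (ext w) * fine (mu (cyl (ext w) n)).
Proof.
have fin_cyl w : mu (cyl (ext w) n) \is a fin_num.
  by apply: fin_num_measure; exact: cyl_measurable.
rewrite /Rintegral.
under eq_integral => x _ do rewrite (cylinder_decomposition _ _ hf x) -sumEFin.
rewrite ge0_integral_sum //; last first.
- by move=> w x _; rewrite lee_fin mulr_ge0 // indic_ge0.
- move=> w; apply/measurable_realfun.measurable_EFinP.
  apply: measurable_realfun.measurable_funM => //.
  by apply: measurable_realfun.measurable_indic; exact: cyl_measurable.
have hw w : (\int[mu]_x (f (ext w) * \1_(cyl (ext w) n) x)%:E)%E
             = ((f (ext w))%:E * mu (cyl (ext w) n))%E.
  rewrite (integralZl_indic measurableT (fun=> cyl (ext w) n)); last 2 first.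
  - by move=> h; move: (f0 (ext w)); rewrite leNgt h.
  - exact: cyl_measurable.
  by rewrite integral_indic ?setIT //; exact: cyl_measurable.
under eq_bigr do rewrite hw.
rewrite -sum_fine => [|w _]; last by rewrite fin_numM.
by apply: eq_bigr => w _; rewrite fineM.
Qed.

Lemma cylinder_integral_le (mu : probability (Xm R S) R) k f g c
  (f0 : forall x, 0 <= f x) (g0 : forall x, 0 <= g x)
  (hf : depends_upto k f) (hg : depends_upto k g) (hfg : forall x, f x <= c * g x) :
  Rintegral mu setT f <= c * Rintegral mu setT g.
Proof.
rewrite (integral_cylinder_function mu _ _ f0 hf) (integral_cylinder_function mu _ _ g0 hg).
rewrite mulr_sumr; apply: ler_sum => w _; rewrite mulrA.
by apply: ler_wpM2r; [apply: fine_ge0; exact: measure_ge0 | exact: hfg].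
Qed.

Lemma cylinder_integral_compare (mu mu' : probability (Xm R S) R) n h K
  (h0 : forall x, 0 <= h x) (hh : depends_upto n h)
  (hK : forall x, fine (mu (cyl x n)) <= K * fine (mu' (cyl x n))) :
  Rintegral mu setT h <= K * Rintegral mu' setT h.
Proof.
rewrite (integral_cylinder_function mu _ _ h0 hh) (integral_cylinder_function mu' _ _ h0 hh).
by rewrite mulr_sumr; apply: ler_sum => w _; rewrite mulrCA; apply: ler_wpM2l.
Qed.

End CylinderFunctions.

Lemma gibbs_cylinder_compare {R : realType} {S : pointedType} {Theta : Type}
  (mu : Theta -> probability (Xm R S) R) (phi : Theta -> (nat -> S) -> R)
  (N : R) (P : Theta -> R) th th' n (x : nat -> S) :
  uniform_Gibbs mu phi N P -> (1 <= n)%N ->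
  fine (mu th (@cyl R S x n)) <=
    N ^+ 2 * expR (n%:R * (`|P th - P th'| + supnorm (fun u => phi th u - phi th' u)))
    * fine (mu th' (@cyl R S x n)).
Proof.
move=> [N0 hG] hn.
have [_ [hol Gth]] := hG th; have [_ [hol' Gth']] := hG th'.
have [_ hi] := Gth x n hn; have [lo' _] := Gth' x n hn.
have fin_cyl th1 : mu th1 (@cyl R S x n) \is a fin_num.
  by apply: fin_num_measure; exact: cyl_measurable.
rewrite -(fineK (fin_cyl th)) lee_fin in hi; rewrite -(fineK (fin_cyl th')) lee_fin in lo'.
set D := _ + _; set a := - P th * n%:R + _ in hi; set b := - P th' * n%:R + _ in lo'.
have hab : a <= n%:R * D + b.
  have hB := birkhoff_sub_le (phi th) (phi th') n x hol hol'.
  have hP : (P th' - P th) * n%:R <= n%:R * `|P th - P th'|.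
    by rewrite mulrC ler_wpM2l // distrC ler_norm.
  by rewrite /a /b /D; lra.
have c0 : 0 <= N ^+ 2 * expR (n%:R * D) by rewrite mulr_ge0 ?exprn_ge0 ?expR_ge0 ?ltW.
apply: (le_trans hi); apply: le_trans (ler_wpM2l c0 lo').
have -> : N ^+ 2 * expR (n%:R * D) * (N^-1 * expR b) = N * expR (n%:R * D + b).
  rewrite (expRD (n%:R * D) b); move: (expR (n%:R * D)) (expR b) => E1 E2.
  by field; rewrite gt_eqF.
by rewrite ler_pM2l // ler_expR.
Qed.

Lemma omega_modulus {R : realType} {S : pointedType} {omega : R -> R} {e : R} :
  omega 0 = 0 -> omega r @[r --> 0^'+] --> 0 -> 0 < e ->
  exists2 m : nat, (0 < m)%N &
    forall x x' : nat -> S, agree_upto m x x' -> omega (dX R x x') <= e.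
Proof.
move=> om0 omlim e0.
have [d /= d0 hd] := @cvgr_dist_lt _ _ _ _ _ omega 0 omlim e e0.
pose m := (Num.Def.truncn d^-1).+1; exists m => // x x' hx.
have hm : (2^-1 : R) ^+ m < d.
  have h1 : d^-1 < m%:R by apply: truncnS_gt.
  have h2 : (m%:R : R) < (2 ^ m)%:R by rewrite ltr_nat ltn_expl.
  rewrite exprVn invf_plt ?posrE ?exprn_gt0 //.
  by apply: lt_trans h1 _; rewrite -natrX.
have [->|dpos] := eqVneq (dX R x x') 0; first by rewrite om0 ltW.
have dgt0 : 0 < dX R x x' by rewrite lt_neqAle eq_sym dpos dX_ge0.
have := hd (dX R x x'); rewrite /ball_ /= sub0r normrN gtr0_norm //.
move=> /(_ (le_lt_trans (dX_le_agree hx) hm) dgt0); rewrite sub0r normrN.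
by move=> /ltW; apply: le_trans; exact: ler_norm.
Qed.

Lemma ratio_le_chain {R : realFieldType} {A H H' B a b c : R} :
  0 <= a -> 0 <= b -> 0 <= c -> 0 <= B ->
  A <= a * H -> H <= b * H' -> H' <= c * B -> A / B <= a * b * c.
Proof.
move=> a0 b0 c0 B0 hA hH hH'.
have [->|Bne0] := eqVneq B 0; first by rewrite invr0 mulr0 !mulr_ge0.
have Bgt0 : 0 < B by rewrite lt_neqAle eq_sym Bne0.
rewrite ler_pdivrMr //.
apply: (le_trans hA); rewrite -!mulrA; apply: ler_wpM2l => //.
by apply: (le_trans hH); apply: ler_wpM2l.
Qed.

Section LossWeights.
Context {R : realType} {S : pointedType} {Theta Y : Type}.
Context {dT : Theta -> Theta -> R} {omega : R -> R}.
Variables (L : Theta -> (nat -> S) -> Y -> R) (Psi : Y -> Y).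

Definition loss_weight (th : Theta) (t : nat) (y : Y) (x : nat -> S) : R :=
  expR (- lossT L Psi th t x y).

Lemma loss_weight_ge0 th t y x : 0 <= loss_weight th t y x.
Proof. exact: expR_ge0. Qed.

Lemma loss_weight_depends {th t y r} :
  (forall x x' y, (forall i, (i <= r)%N -> x i = x' i) -> L th x y = L th x' y) ->
  depends_upto (t + r.+1) (loss_weight th t y).
Proof.
move=> hr x x' hx; congr (expR (- _)); apply: eq_bigr => j _.
apply: hr; apply: (agree_iter_shiftX (n := r.+1)); apply: agree_uptoW hx.
by rewrite leq_add2r ltnW.
Qed.

Hypothesis loss_lipschitz : forall th th' x x' y,
  `|L th x y - L th' x' y| <= omega (dT th th') + omega (dX R x x').

Context {e : R} {m : nat}.
Hypothesis omega_small : forall x x' : nat -> S, agree_upto m x x' -> omega (dX R x x') <= e.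

Lemma loss_weight_compare th1 th2 t y x x' : agree_upto (t + m) x x' ->
  loss_weight th1 t y x <= expR (t%:R * (omega (dT th1 th2) + e)) * loss_weight th2 t y x'.
Proof.
move=> hx; rewrite /loss_weight -expRD ler_expR.
suff : lossT L Psi th2 t x' y - lossT L Psi th1 t x y <= t%:R * (omega (dT th1 th2) + e).
  by lra.
have -> : t%:R * (omega (dT th1 th2) + e) = \sum_(j < t) (omega (dT th1 th2) + e).
  by rewrite sumr_const card_ord mulr_natl.
rewrite /lossT -sumrB; apply: ler_sum => j _.
apply: le_trans (ler_norm _) _; rewrite distrC; apply: le_trans (loss_lipschitz _ _ _ _ _) _.
rewrite lerD2l; apply: omega_small; apply: agree_iter_shiftX; apply: agree_uptoW hx.
by rewrite leq_add2r ltnW.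
Qed.

Context {alphabet : seq S}.
Hypothesis alphabet_full : forall a : S, a \in alphabet.
Hypothesis loss_local : forall th, exists r : nat,
  forall x x' y, (forall i, (i <= r)%N -> x i = x' i) -> L th x y = L th x' y.

Lemma integral_loss_weight_truncate (mu : probability (Xm R S) R) th1 th2 t y n :
  (t + m <= n)%N ->
  Rintegral mu setT (loss_weight th1 t y) <=
    expR (t%:R * (omega (dT th1 th2) + e)) * Rintegral mu setT (loss_weight th2 t y \o truncX n).
Proof.
move=> hn; have [r hr] := loss_local th1.
apply: (cylinder_integral_le alphabet_full mu (maxn (t + r.+1) n)) => [x|x|||x].
- exact: loss_weight_ge0.
- exact: loss_weight_ge0.
- exact: depends_uptoW (leq_maxl _ _) (loss_weight_depends hr).
- by apply: depends_uptoW (leq_maxr _ _) _ => x x' /truncX_agree /= ->.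
- by apply: loss_weight_compare; apply: agree_uptoW hn (agree_truncX n x).
Qed.

Lemma integral_truncate_loss_weight (mu : probability (Xm R S) R) th1 th2 t y n :
  (t + m <= n)%N ->
  Rintegral mu setT (loss_weight th1 t y \o truncX n) <=
    expR (t%:R * (omega (dT th1 th2) + e)) * Rintegral mu setT (loss_weight th2 t y).
Proof.
move=> hn; have [r hr] := loss_local th2.
apply: (cylinder_integral_le alphabet_full mu (maxn n (t + r.+1))) => [x|x|||x].
- exact: loss_weight_ge0.
- exact: loss_weight_ge0.
- by apply: depends_uptoW (leq_maxl _ _) _ => x x' /truncX_agree /= ->.
- exact: depends_uptoW (leq_maxr _ _) (loss_weight_depends hr).
- apply: loss_weight_compare => i /(agree_uptoW hn (agree_truncX n x)) hi.
  by rewrite -hi.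
Qed.

End LossWeights.

Theorem lemma6p2 (R : realType)
  (S : pointedType) (finS : finite_set [set: S])
  (Theta : Type) (dT : Theta -> Theta -> R)
  (Y : completePseudoMetricType R) (Psi : Y -> Y)
  (mu : Theta -> probability (Xm R S) R) (phi : Theta -> (nat -> S) -> R)
  (N : R) (P : Theta -> R)
  (L : Theta -> (nat -> S) -> Y -> R) (omega : R -> R) :
  is_metric dT -> compact_d dT ->
  hausdorff_space Y -> separable Y -> borel_measurable Psi ->
  uniform_Gibbs mu phi N P ->
  loss_assumption dT L omega ->
  forall eps : R, 0 < eps -> exists2 T : R, 0 < T &
    forall (th th' : Theta) (y : Y) (t : nat), (1 <= t)%N ->
      Rintegral (mu th) setT (fun x : Xm R S => expR (- lossT L Psi th t x y)) /
      Rintegral (mu th') setT (fun x' : Xm R S => expR (- lossT L Psi th' t x' y))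
      <= N ^+ 2 * expR (t%:R * (omega (dT th th') + eps)
                        + (t%:R + T) * (`|P th - P th'|
                                        + supnorm (fun x => phi th x - phi th' x))).
Proof.
move=> [_ dT0 _ _] _ _ _ _ hG [hL [_ [om0 [omlim hlip]]]] eps eps0.
have [s hs] : exists s : seq S, forall a, a \in s.
  have [s hs] := (finite_seqP _).1 finS.
  by exists s => a; have : [set: S] a by []; rewrite hs.
have hloc th := (hL th).2.2.
have [m m0 hm] := omega_modulus (S := S) om0 omlim (divr_gt0 eps0 (ltr0n _ 2)).
exists m%:R => [|th th' y t ht]; first by rewrite ltr0n.
pose n := (t + m)%N; have hn : (1 <= n)%N by rewrite (leq_trans ht) ?leq_addr.
set D := _ + supnorm _; pose h := loss_weight L Psi th t y \o truncX n.
have truncate_th :=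
  integral_loss_weight_truncate L Psi hlip hm hs hloc (mu th) th th t y n (leqnn n).
rewrite (dT0 th th).2 // om0 in truncate_th.
have gibbs_swap :
    Rintegral (mu th) setT h <= N ^+ 2 * expR (n%:R * D) * Rintegral (mu th') setT h.
  apply: (cylinder_integral_compare hs) => [x|x x' /truncX_agree hx|x].
  - exact: loss_weight_ge0.
  - by rewrite /h /= hx.
  - exact: gibbs_cylinder_compare.
have untruncate_th' :=
  integral_truncate_loss_weight L Psi hlip hm hs hloc (mu th') th th' t y n (leqnn n).
have N0 : 0 <= N ^+ 2 * expR (n%:R * D) by rewrite mulr_ge0 ?exprn_ge0 ?expR_ge0 ?ltW ?hG.1.
have B0 : 0 <= Rintegral (mu th') setT (loss_weight L Psi th' t y).
  by apply: Rintegral_ge0 => x _; exact: loss_weight_ge0.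
have := ratio_le_chain (expR_ge0 _) N0 (expR_ge0 _) B0 truncate_th gibbs_swap untruncate_th'.
move/le_trans; apply.
rewrite le_eqVlt; apply/orP; left; apply/eqP.
rewrite mulrCA -mulrA -!expRD; congr (_ * expR _).
by rewrite /n natrD; field.
Qed.
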